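(* There is an absolute constant $C>0$ such that for every $a\in(-\infty,1)$ and all $\omega_1,\omega_2\in\mathbb D_a$, $$|r(\omega_1)-r(\omega_2)|\le C\,\|\rho(\omega_1-\omega_2)\|_{L^\infty}^{1/2}.$$
   Context: Let $\rho(x)=(1+|x|)^{-1/2}$ and $\eta_a=\frac{1}{2^{9/2}(4+|a|)^3}$. $\mathbb D_a$ is the set of continuous even functions $\omega$ on $\mathbb R$ with $\|\rho\omega\|_{L^\infty}<\infty$ such that $\omega(0)=1$; $(1-x^2)_+\le\omega(x)\le1$ for all $x$; $\omega$ is non-increasing on $[0,\infty)$; $s\mapsto\omega(\sqrt s)$ is convex on $[0,\infty)$; and the left derivative satisfies $\omega'_-(1/2)\le-\eta_a$. $r(\omega)=\frac1\pi\int_0^\infty\frac{\omega(0)-\omega(y)}{y^2}\,dy$. *)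

From HB Require Import structures.
From mathcomp Require Import all_boot all_order all_algebra.
From mathcomp Require Import all_classical all_reals all_analysis.
From mathcomp Require Import Rstruct Rstruct_topology.

Set Implicit Arguments. Unset Strict Implicit. Unset Printing Implicit Defensive.
Import Order.TTheory GRing.Theory Num.Theory.
Import numFieldNormedType.Exports.
Local Open Scope classical_set_scope.
Local Open Scope ring_scope.

Definition RR := Rdefinitions.R.

Definition rho (x : RR) : RR := (Num.sqrt (1 + `|x|))^-1.

Definition eta (a : RR) : RR := (((2 : RR) `^ (9%:R / 2)) * (4 + `|a|) ^+ 3)^-1.

(* || rho * f ||_{L^oo} for continuous f : the supremum of |rho f| *)
Definition wnorm (f : RR -> RR) : RR := sup [set `|rho x * f x| | x in [set: RR]].

Definition in_D (a : RR) (w : RR -> RR) : Prop :=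
  continuous w /\
  (forall x, w (- x) = w x) /\
  (exists M : RR, forall x, `|rho x * w x| <= M) /\
  w 0 = 1 /\
  (forall x, Num.max 0 (1 - x ^+ 2) <= w x /\ w x <= 1) /\
  (forall x y, 0 <= x -> x <= y -> w y <= w x) /\
  (* s |-> w (sqrt s) is convex on [0, +oo) *)
  (forall s t l, 0 <= s -> 0 <= t -> 0 <= l -> l <= 1 ->
     w (Num.sqrt (l * s + (1 - l) * t))
       <= l * w (Num.sqrt s) + (1 - l) * w (Num.sqrt t)) /\
  (exists2 d : RR, d <= - eta a &
     (fun x => (w x - w (2^-1)) / (x - 2^-1)) @ at_left (2^-1) --> d).
(* r(w) = 1/pi * int_0^oo (w(0) - w(y)) / y^2 dy  (Lebesgue integral,
   nonnegative integrand for w in D_a) *)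
Definition r (w : RR -> RR) : RR :=
  pi^-1 * fine (\int[@lebesgue_measure RR]_(y in `[0%R, +oo[%classic)
                   ((w 0 - w y) / y ^+ 2)%:E)%E.

From HB Require Import structures.
From mathcomp Require Import all_boot all_order all_algebra.
From mathcomp Require Import all_classical all_reals all_analysis.
From mathcomp Require Import Rstruct Rstruct_topology.
From mathcomp Require Import ring lra.
Import Order.TTheory GRing.Theory Num.Theory.
Import numFieldNormedType.Exports.

Set Implicit Arguments.
Unset Strict Implicit.
Unset Printing Implicit Defensive.
Local Open Scope classical_set_scope.
Local Open Scope ring_scope.

(* Only the sandwich (1 - y^2)_+ <= w <= 1 = w(0) is used: it makes the
   integrand (w(0) - w(y)) / y^2 of r take values in [0, 1], and for two such
   profiles with |w1 - w2| <= d sqrt(1 + |y|) the difference of integrands is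
   at most min(1, d (y^-2 + y^-3/2)).  Integrating the first bound on [0, s]
   and the second on [s, +oo) gives s + d/s + 2d/sqrt s, which is at most
   4 sqrt d for the choice s = sqrt d when d <= 1; when d > 1 the trivial
   bound 2 on each of the two integrals suffices. *)

Section TailMajorant.
Context {R : realType}.

Definition tail_majorant (c c' y : R) : R := c / y ^+ 2 + c' / (y * Num.sqrt y).

Definition tail_primitive (c c' y : R) : R :=
  - (c * y^-1 + (2 * c') * (Num.sqrt y)^-1).

Lemma is_derive_tail_primitive c c' (x : R) : 0 < x ->
  is_derive x 1 (tail_primitive c c') (tail_majorant c c' x).
Proof.
move=> x0; have sx0 : 0 < Num.sqrt x by rewrite sqrtr_gt0.
have dV : is_derive x (1 : R) (fun y : R => y^-1) (- x ^- 2 *: 1).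
  by apply: (@is_deriveV _ id) => //; rewrite gt_eqF.
have dVsqrt : is_derive x (1 : R) (fun y : R => (Num.sqrt y)^-1)
    (- (Num.sqrt x) ^- 2 *: (2 * Num.sqrt x)^-1).
  apply: (@is_deriveV _ Num.sqrt); first by rewrite gt_eqF.
  exact: is_derive1_sqrt.
have := is_deriveN (is_deriveD (is_deriveZ c dV) (is_deriveZ (2 * c') dVsqrt)).
congr is_derive; rewrite /tail_majorant /GRing.scale /= sqr_sqrtr ?ltW //.
by field; rewrite !gt_eqF.
Qed.

Lemma continuous_tail_majorant c c' (x : R) : 0 < x ->
  {for x, continuous (tail_majorant c c')}.
Proof.
move=> x0; have sx0 : 0 < Num.sqrt x by rewrite sqrtr_gt0.
apply: cvgD; apply: cvgMl_tmp; apply: cvgV.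
- by rewrite expf_neq0 // gt_eqF.
- exact: exprn_continuous.
- by rewrite mulf_neq0 // gt_eqF.
- by apply: cvgM; [exact: cvg_id | exact: sqrt_continuous].
Qed.

Lemma tail_primitive_cvgy c c' : tail_primitive c c' x @[x --> +oo] --> (0 : R).
Proof.
have invx : (fun x : R => x^-1) x @[x --> +oo] --> (0 : R).
  apply/gtr0_cvgV0; first exact: (nbhs_pinfty_gt (num_real 0)).
  exact: cvg_id.
have invsqrt : (fun x : R => (Num.sqrt x)^-1) x @[x --> +oo] --> (0 : R).
  apply/gtr0_cvgV0.
    by apply: filterS (nbhs_pinfty_gt (num_real 0)) => x x0; rewrite sqrtr_gt0.
  apply/cvgryPge => A; apply: filterS (nbhs_pinfty_ge (num_real (A ^+ 2))) => x Ax.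
  by rewrite (le_trans (ler_norm A)) // -sqrtr_sqr ler_wsqrtr.
rewrite -oppr0 -[X in - X](addr0 0); apply: cvgN; apply: cvgD.
  by rewrite -(mulr0 c); exact: cvgMl_tmp.
by rewrite -(mulr0 (2 * c')); exact: cvgMl_tmp.
Qed.

Lemma measurable_tail_majorant c c' (s : R) : 0 < s ->
  measurable_fun `[s, +oo[ (tail_majorant c c').
Proof.
move=> s0; apply/measurable_realfun.measurable_fun_itv_obnd_cbndP.
apply: measurable_realfun.open_continuous_measurable_fun => // x.
rewrite inE /= in_itv /= andbT => sx.
by apply: continuous_tail_majorant; exact: lt_trans sx.
Qed.

Local Open Scope ereal_scope.

Lemma integral_tail_majorant c c' (s : R) : (0 < s)%R -> (0 <= c)%R -> (0 <= c')%R ->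
  \int[lebesgue_measure]_(x in `[s, +oo[) (tail_majorant c c' x)%:E
    = (c / s + 2 * c' / Num.sqrt s)%:E.
Proof.
move=> s0 c0 c'0.
have hder x : (s <= x)%R -> is_derive x 1%R (tail_primitive c c') (tail_majorant c c' x).
  by move=> sx; apply: is_derive_tail_primitive; exact: lt_le_trans sx.
rewrite (@ge0_continuous_FTC2y _ _ (tail_primitive c c') s 0).
- by rewrite /tail_primitive sub0e -EFinN opprK.
- move=> x sx; have x0 : (0 < x)%R := lt_le_trans s0 sx.
  by rewrite /tail_majorant addr_ge0 // divr_ge0 // ?mulr_ge0 ?sqrtr_ge0 // ltW.
- apply: continuous_in_subspaceT => x; rewrite inE /= in_itv /= andbT => sx.
  by apply: continuous_tail_majorant; exact: lt_le_trans sx.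
- exact: tail_primitive_cvgy.
- by move=> x sx; case: (hder _ (ltW sx)).
- have : {within `[s, +oo[, continuous (tail_primitive c c')}.
    apply: derivable_within_continuous => x; rewrite in_itv /= andbT => sx.
    by case: (hder _ sx).
  by move/continuous_within_itvcyP => [].
- move=> x; rewrite in_itv /= andbT => sx.
  by rewrite derive1E; apply: derive_val; apply: hder; exact: ltW.
Qed.

Lemma integral_le_unit_then_tail_majorant (g : R -> R) (s c c' : R) :
  (0 < s)%R -> (0 <= c)%R -> (0 <= c')%R ->
  measurable_fun (`[0%R, +oo[ : set R) g ->
  (forall y, (0 <= y)%R -> (0 <= g y)%R) ->
  (forall y, (0 <= y)%R -> (y < s)%R -> (g y <= 1)%R) ->
  (forall y, (s <= y)%R -> (g y <= tail_majorant c c' y)%R) ->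
  \int[lebesgue_measure]_(y in `[0%R, +oo[) (g y)%:E
    <= (s + (c / s + 2 * c' / Num.sqrt s))%:E.
Proof.
move=> s0 c0 c'0 mg g0 g1 g2.
have split0s : `[0%R, +oo[%classic
    = [set` Interval (BLeft 0%R) (BLeft s)] `|` [set` Interval (BLeft s) +oo%O].
  by apply: itv_bndbnd_setU; rewrite bnd_simp // ltW.
rewrite split0s ge0_integral_setU //=; first last.
- rewrite disj_set2E; apply/eqP/seteqP; split => x //= [].
  by rewrite !in_itv /= andbT => /andP[_ xs] /(lt_le_trans xs); rewrite ltxx.
- move=> x x0s; have : `[0%R, +oo[%classic x by rewrite split0s.
  by rewrite /= in_itv /= andbT => x0; rewrite lee_fin g0.
- by apply/measurable_realfun.measurable_EFinP; rewrite -split0s.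
rewrite EFinD; apply: leeD.
- have -> : s%:E = \int[lebesgue_measure]_(x in `[0%R, s[) (cst 1) x.
    by rewrite integral_cst //= lebesgue_measure_itv /= lte_fin s0 mul1e oppr0 adde0.
  apply: ge0_le_integral => //.
  + by move=> x; rewrite /= in_itv /= => /andP[x0 _]; rewrite lee_fin g0.
  + apply/measurable_realfun.measurable_EFinP; apply: measurable_funS mg => //.
    by move=> x; rewrite /= !in_itv /= => /andP[-> _].
  + by move=> x; rewrite /= in_itv /= => /andP[x0 xs]; rewrite lee_fin g1.
- rewrite -integral_tail_majorant //; apply: ge0_le_integral => //.
  + by move=> x; rewrite /= in_itv /= andbT => sx; rewrite lee_fin g0 // (le_trans (ltW s0)).
  + apply/measurable_realfun.measurable_EFinP; apply: measurable_funS mg => //.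
    by move=> x; rewrite /= !in_itv /= !andbT => /(le_trans (ltW s0)).
  + by apply/measurable_realfun.measurable_EFinP; apply: measurable_tail_majorant.
  + by move=> x; rewrite /= in_itv /= andbT => sx; rewrite lee_fin g2.
Qed.

End TailMajorant.

Section Profiles.
Context {R : realType}.

Definition sandwiched (w : R -> R) := [/\ continuous w, w 0 = 1 &
  forall x, Num.max 0 (1 - x ^+ 2) <= w x <= 1].

Definition r_integrand (w : R -> R) (y : R) : R := (w 0 - w y) / y ^+ 2.

Definition r_integral (w : R -> R) : \bar R :=
  \int[lebesgue_measure]_(y in `[0%R, +oo[) (r_integrand w y)%:E.

Lemma div_sqr_le1 (a y : R) : `|a| <= y ^+ 2 -> `|a| / y ^+ 2 <= 1.
Proof.
move=> ay; have [->|y0] := eqVneq y 0; first by rewrite expr0n /= invr0 mulr0.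
by rewrite ler_pdivrMr ?mul1r // exprn_even_gt0 //= y0.
Qed.

(* The split point s = sqrt d balances s against d / s. *)
Lemma split_sqrt_bound (d : R) : 0 < d -> d <= 1 ->
  Num.sqrt d + (d / Num.sqrt d + 2 * d / Num.sqrt (Num.sqrt d)) <= 4 * Num.sqrt d.
Proof.
move=> d0 d1; have [u u0 du] : exists2 u, 0 < u & d = u ^+ 4.
  exists (Num.sqrt (Num.sqrt d)); first by rewrite !sqrtr_gt0.
  by rewrite (_ : 4 = 2 * 2)%N // exprM !sqr_sqrtr ?sqrtr_ge0 // ltW.
have u1 : u <= 1 by rewrite -(@expr_le1 _ 4) ?(ltW u0) // -du.
have -> : Num.sqrt d = u ^+ 2.
  by rewrite du (_ : 4 = 2 * 2)%N // exprM sqrtr_sqr ger0_norm // sqr_ge0.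
rewrite sqrtr_sqr ger0_norm ?(ltW u0) // du.
have -> : u ^+ 2 + (u ^+ 4 / u ^+ 2 + 2 * u ^+ 4 / u) = 2 * u ^+ 2 + 2 * u ^+ 3.
  by field; rewrite gt_eqF.
nra.
Qed.

Section OneProfile.
Variable w : R -> R.

Lemma measurable_r_integrand : continuous w ->
  measurable_fun (`[0%R, +oo[ : set R) (r_integrand w).
Proof.
move=> cw; apply/measurable_realfun.measurable_fun_itv_obnd_cbndP.
apply: measurable_realfun.open_continuous_measurable_fun => // x.
rewrite inE /= in_itv /= andbT => x0.
apply: cvgM; first by apply: cvgB; [exact: cvg_cst | exact: cw].
apply: cvgV; first by rewrite expf_neq0 // gt_eqF.
exact: exprn_continuous.
Qed.

Lemma sandwiched_bounds : sandwiched w -> forall y, 0 <= w y <= 1 /\ 1 - w y <= y ^+ 2.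
Proof.
move=> [_ _ b] y; have /andP[] := b y; rewrite ge_max => /andP[w_ge0 wy] w_le1.
by rewrite w_ge0 w_le1; split=> //; lra.
Qed.

Lemma r_integrand_ge0 y : sandwiched w -> 0 <= r_integrand w y.
Proof.
move=> sw; have [/andP[_ wy1] _] := sandwiched_bounds sw y.
by case: sw => _ w0 _; rewrite /r_integrand w0 divr_ge0 ?sqr_ge0 ?subr_ge0.
Qed.

Lemma r_integrand_le1 y : sandwiched w -> r_integrand w y <= 1.
Proof.
move=> sw; have [/andP[_ wy1] wy] := sandwiched_bounds sw y.
case: sw => _ w0 _; rewrite /r_integrand w0.
by rewrite -[1 - w y]ger0_norm ?subr_ge0 // div_sqr_le1 // ger0_norm ?subr_ge0.
Qed.

Lemma r_integral_le2 : sandwiched w -> (r_integral w <= 2%:E)%E.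
Proof.
move=> sw; have [cw w0 _] := sw.
have := @integral_le_unit_then_tail_majorant _ (r_integrand w) 1 1 0 ltr01 ler01
  (lexx 0) (measurable_r_integrand cw) (fun y _ => r_integrand_ge0 y sw)
  (fun y _ _ => r_integrand_le1 y sw).
rewrite sqrtr1 !divr1 mulr0 addr0 => -> // y y1.
have [/andP[wy0 _] _] := sandwiched_bounds sw y.
rewrite /tail_majorant /r_integrand w0 mul0r addr0 ler_wpM2r ?invr_ge0 ?sqr_ge0 //.
by rewrite lerBlDr lerDl.
Qed.

Lemma r_integral_ge0 : sandwiched w -> (0 <= r_integral w)%E.
Proof.
by move=> sw; apply: integral_ge0 => y _; rewrite lee_fin r_integrand_ge0.
Qed.

Lemma r_integral_fin_num : sandwiched w -> r_integral w \is a fin_num.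
Proof.
move=> sw; rewrite ge0_fin_numE ?r_integral_ge0 //.
exact: le_lt_trans (r_integral_le2 sw) (ltry 2).
Qed.

Lemma integrable_r_integrand : sandwiched w ->
  lebesgue_measure.-integrable (`[0%R, +oo[ : set R) (EFin \o r_integrand w).
Proof.
move=> sw; have [cw _ _] := sw; apply/integrableP; split.
  by apply/measurable_realfun.measurable_EFinP; apply: measurable_r_integrand.
apply: le_lt_trans (ltry 2); apply: le_trans (r_integral_le2 sw).
rewrite le_eqVlt; apply/orP; left; apply/eqP; apply: eq_integral => y _.
by rewrite /= ger0_norm ?r_integrand_ge0.
Qed.

End OneProfile.

Section TwoProfiles.
Variables w1 w2 : R -> R.
Hypotheses (sw1 : sandwiched w1) (sw2 : sandwiched w2).

Lemma fine_r_integral_dist_le2 :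
  `|fine (r_integral w1) - fine (r_integral w2)| <= 2.
Proof.
have bnd v : sandwiched v -> 0 <= fine (r_integral v) <= 2.
  move=> sv; rewrite fine_ge0 ?r_integral_ge0 //=.
  by rewrite -lee_fin fineK ?r_integral_fin_num ?r_integral_le2.
have /andP[? ?] := bnd _ sw1; have /andP[? ?] := bnd _ sw2.
by rewrite ler_norml; apply/andP; split; lra.
Qed.

Lemma sandwiched_dist_le1 y : `|w1 y - w2 y| <= 1.
Proof.
have [/andP[? ?] _] := sandwiched_bounds sw1 y.
have [/andP[? ?] _] := sandwiched_bounds sw2 y.
by rewrite ler_norml; apply/andP; split; lra.
Qed.

Lemma r_integrand_dist y :
  `|r_integrand w1 y - r_integrand w2 y| = `|w1 y - w2 y| / y ^+ 2.
Proof.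
case: sw1 => _ e1 _; case: sw2 => _ e2 _.
rewrite /r_integrand e1 e2 -mulrBl normrM normfV (ger0_norm (sqr_ge0 y)).
by rewrite opprB addrC addrA subrK distrC.
Qed.

Lemma sandwiched_dist_le_sqr y : `|w1 y - w2 y| <= y ^+ 2.
Proof.
have [/andP[? ?] ?] := sandwiched_bounds sw1 y.
have [/andP[? ?] ?] := sandwiched_bounds sw2 y.
by rewrite ler_norml; apply/andP; split; lra.
Qed.

Lemma weight_le_tail_majorant (d y : R) : 0 <= d -> 0 < y ->
  d * Num.sqrt (1 + `|y|) / y ^+ 2 <= tail_majorant d d y.
Proof.
move=> d0 y0; have [t t0 ->] : exists2 t, 0 < t & y = t ^+ 2.
  by exists (Num.sqrt y); rewrite ?sqrtr_gt0 ?sqr_sqrtr // ltW.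
rewrite /tail_majorant ger0_norm ?sqr_ge0 // sqrtr_sqr ger0_norm ?(ltW t0) //.
have -> : d / (t ^+ 2) ^+ 2 + d / (t ^+ 2 * t) = d * (1 + t) / (t ^+ 2) ^+ 2.
  by field; rewrite gt_eqF.
rewrite ler_wpM2r ?invr_ge0 ?exprn_ge0 ?sqr_ge0 ?(ltW t0) // ler_wpM2l //.
rewrite -ler_sqr ?nnegrE ?sqrtr_ge0 ?addr_ge0 ?(ltW t0) // sqr_sqrtr ?addr_ge0 ?sqr_ge0 //.
nra.
Qed.

Variable d : R.
Hypothesis w12_le : forall x, `|w1 x - w2 x| <= d * Num.sqrt (1 + `|x|).

Lemma integral_r_integrand_dist_le : 0 < d -> d <= 1 ->
  (\int[lebesgue_measure]_(y in `[0%R, +oo[) (`|r_integrand w1 y - r_integrand w2 y|)%:E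
     <= (4 * Num.sqrt d)%:E)%E.
Proof.
move=> d0 d1; have sd0 : 0 < Num.sqrt d by rewrite sqrtr_gt0.
apply: le_trans (@integral_le_unit_then_tail_majorant _ _ (Num.sqrt d) d d sd0
  (ltW d0) (ltW d0) _ _ _ _) _.
- apply: measurableT_comp; first exact: measurable_realfun.normr_measurable.
  by apply: measurable_realfun.measurable_funB;
    apply: measurable_r_integrand; [case: sw1 | case: sw2].
- by [].
- by move=> y _ _; rewrite r_integrand_dist div_sqr_le1 ?sandwiched_dist_le_sqr.
- move=> y sy; have y0 : 0 < y := lt_le_trans sd0 sy.
  rewrite r_integrand_dist; apply: le_trans (weight_le_tail_majorant (ltW d0) y0).
  by rewrite ler_wpM2r ?invr_ge0 ?sqr_ge0.
by rewrite lee_fin split_sqrt_bound.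
Qed.

Lemma fine_r_integral_dist_le_sqrt : 0 <= d ->
  `|fine (r_integral w1) - fine (r_integral w2)| <= 4 * Num.sqrt d.
Proof.
move=> d0; have [d_eq0 | dn0] := eqVneq d 0.
  suff -> : w1 = w2 by rewrite subrr normr0 mulr_ge0 ?sqrtr_ge0.
  apply: funext => x; apply/eqP; rewrite -subr_eq0 -normr_le0.
  by have := w12_le x; rewrite d_eq0 mul0r.
have {d0 dn0} dpos : 0 < d by rewrite lt_neqAle eq_sym dn0.
have [d1 | d1] := lerP d 1; last first.
  apply: le_trans fine_r_integral_dist_le2 _.
  have : 1 <= Num.sqrt d by rewrite -sqrtr1 ler_wsqrtr // ltW.
  by lra.
have f1 := r_integral_fin_num sw1; have f2 := r_integral_fin_num sw2.
rewrite -fineB // -lee_fin -abse_EFin fineK; last by rewrite fin_numB f1 f2.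
have -> : (r_integral w1 - r_integral w2 = \int[lebesgue_measure]_(y in `[0%R, +oo[)
    ((r_integrand w1 y)%:E - (r_integrand w2 y)%:E))%E.
  by rewrite integralB_EFin ?integrable_r_integrand.
apply: le_trans (integral_r_integrand_dist_le dpos d1).
apply: le_abse_integral => //.
apply/measurable_realfun.measurable_EFinP/measurable_realfun.measurable_funB.
  by apply: measurable_r_integrand; case: sw1.
by apply: measurable_r_integrand; case: sw2.
Qed.

End TwoProfiles.

End Profiles.

Lemma in_D_sandwiched (a : RR) (w : RR -> RR) : in_D a w -> sandwiched w.
Proof. by move=> [cw [_ [_ [w0 [b _]]]]]; split => // x; have [-> ->] := b x. Qed.

Lemma rho_le1 (x : RR) : `|rho x| <= 1.
Proof.
rewrite /rho ger0_norm ?invr_ge0 ?sqrtr_ge0 // invf_le1 ?sqrtr_gt0 ?ltr_pwDl //.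
by rewrite -{1}sqrtr1 ler_wsqrtr // lerDl.
Qed.

(* [wnorm] is a [sup], which bounds the set only if the set is bounded. *)
Lemma le_wnorm (f : RR -> RR) (M : RR) : (forall x, `|f x| <= M) ->
  forall x, `|rho x * f x| <= wnorm f.
Proof.
move=> fM x; apply: sup_upper_bound; last by exists x.
split; first by exists `|rho 0 * f 0|, 0.
exists M => _ [y _ <-]; rewrite normrM.
by rewrite -[M]mul1r ler_pM ?rho_le1 ?fM.
Qed.

Lemma le_wnorm_weight (f : RR -> RR) (M : RR) : (forall x, `|f x| <= M) ->
  forall x, `|f x| <= wnorm f * Num.sqrt (1 + `|x|).
Proof.
move=> fM x; have q0 : 0 < Num.sqrt (1 + `|x|) by rewrite sqrtr_gt0 ltr_pwDl.
have := le_wnorm fM x; rewrite normrM /rho ger0_norm ?invr_ge0 ?sqrtr_ge0 //.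
by rewrite -ler_pdivrMr // mulrC.
Qed.

Theorem mainTheorem8 :
  exists C : RR, 0 < C /\
    forall (a : RR) (w1 w2 : RR -> RR), a < 1 ->
      in_D a w1 -> in_D a w2 ->
      `|r w1 - r w2| <= C * Num.sqrt (wnorm (fun x => w1 x - w2 x)).
Proof.
exists 4; split=> // a w1 w2 _ /in_D_sandwiched sw1 /in_D_sandwiched sw2.
have w12_le1 := sandwiched_dist_le1 sw1 sw2.
have d0 : 0 <= wnorm (fun x => w1 x - w2 x).
  exact: le_trans (normr_ge0 _) (le_wnorm w12_le1 0).
have pi_inv_le1 : pi^-1 <= 1 :> RR.
  by rewrite invf_le1 ?pi_gt0 //; have := @pi_ge2 RR; lra.
rewrite /r -mulrBr normrM gtr0_norm ?invr_gt0 ?pi_gt0 // -[4 * _]mul1r.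
apply: ler_pM => //; first by rewrite invr_ge0 ltW ?pi_gt0.
exact: fine_r_integral_dist_le_sqrt (le_wnorm_weight w12_le1) d0.
Qed.
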